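(* Let $k\ge1$, $A,B,C_1,\dots,C_k\in\mathbb{C}^{r\times r}$ with $C_j+mI$ invertible for all $m\ge0$ and all $j$, $AB=BA$, $C_jC_l=C_lC_j$ for all $j,l$. Fix $i$ and $n\ge1$ and suppose $C_i-mI$ is invertible for $0\le m\le n$. Then $$F_{\mathcal C}[C_i-nI]=F_{\mathcal C}+x_iAB\Big[\sum_{n_1=1}^nF_{\mathcal C}[A+I,\,B+I,\,C_i+(2-n_1)I]\,(C_i-n_1I)^{-1}(C_i-(n_1-1)I)^{-1}\Big].$$
   Context: For $M\in\mathbb{C}^{r\times r}$: $(M)_0=I$, $(M)_m=M(M+I)\cdots(M+(m-1)I)$, $(M)^{-1}_m=((M)_m)^{-1}$. $$F_{\mathcal C}=F_{\mathcal C}[A,B;C_1,\dots,C_k;x_1,\dots,x_k]=\sum_{m_1,\dots,m_k\ge0}(A)_{m_1+\cdots+m_k}(B)_{m_1+\cdots+m_k}\prod_{j=1}^k(C_j)^{-1}_{m_j}\prod_{j=1}^k\frac{x_j^{m_j}}{m_j!},$$ $x_j$ scalar variables, matrix products in order of increasing index; identities are of formal power series in the $x_j$. $F_{\mathcal C}[\dots]$ lists only the shifted parameters, all others unchanged. *)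

From HB Require Import structures.
From mathcomp Require Import all_boot all_order all_algebra.
From mathcomp Require Import complex.
From mathcomp Require Import reals.
Set Implicit Arguments. Unset Strict Implicit. Unset Printing Implicit Defensive.
Import Order.TTheory GRing.Theory Num.Theory.
Local Open Scope ring_scope.

Section Defs.
Variables (K : fieldType) (r : nat).

Fixpoint poch (M : 'M[K]_r) (m : nat) : 'M[K]_r :=
  if m is m'.+1 then poch M m' *m (M + (m'%:R)%:M) else 1%:M.

Definition pochinv (M : 'M[K]_r) (m : nat) : 'M[K]_r := invmx (poch M m).

Definition ordprod (k : nat) (F : 'I_k -> 'M[K]_r) : 'M[K]_r :=
  foldr (fun j acc => F j *m acc) 1%:M (enum 'I_k).

(* Coefficient of x_1^{m_1} ... x_k^{m_k} in F_C[A,B;C_1..C_k;x_1..x_k];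
   a formal power series is identified with its coefficient function
   on multi-indices m : 'I_k -> nat. *)
Definition FCcoef (k : nat) (A B : 'M[K]_r) (C : 'I_k -> 'M[K]_r)
    (m : 'I_k -> nat) : 'M[K]_r :=
  let s := (\sum_(j < k) m j)%N in
  (\prod_(j < k) ((m j)`!)%:R)^-1 *:
    (poch A s *m poch B s *m ordprod (fun j => pochinv (C j) (m j))).

Definition updC (k : nat) (C : 'I_k -> 'M[K]_r) (i : 'I_k) (X : 'M[K]_r) :
    'I_k -> 'M[K]_r := fun j => if j == i then X else C j.

(* multi-index m - e_i (used only when m i > 0) *)
Definition decr (k : nat) (m : 'I_k -> nat) (i : 'I_k) : 'I_k -> nat :=
  fun j => if j == i then (m j).-1 else m j.

(* coefficient of x^m in x_i * G, for a series G with coefficients G *)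
Definition mulxcoef (k : nat) (i : 'I_k) (G : ('I_k -> nat) -> 'M[K]_r)
    (m : 'I_k -> nat) : 'M[K]_r :=
  if (0 < m i)%N then G (decr m i) else 0.

End Defs.

From HB Require Import structures.
From mathcomp Require Import all_boot all_order all_algebra.
From mathcomp Require Import complex.
From mathcomp Require Import reals.
From mathcomp Require Import ring.
Import Order.TTheory GRing.Theory Num.Theory.
Set Implicit Arguments. Unset Strict Implicit. Unset Printing Implicit Defensive.
Local Open Scope ring_scope.

(* The identity is proved coefficientwise.  Since the C_j commute, the factor
   ((C_i)_{m_i})^{-1} of the coefficient of x^m commutes with the other factors
   of the ordered product and can be isolated.  If m_i = 0 both sides agree;
   if m_i = b+1 everything reduces to the single-matrix identity
     ((c-n)_{b+1})^{-1} - ((c)_{b+1})^{-1}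
       = (b+1) sum_{n1=1}^n ((c+2-n1)_b)^{-1} (c-n1)^{-1} (c-n1+1)^{-1},
   obtained by telescoping its case n = 1, while the remaining factors match
   through (A)_{s+1} = A (A+1)_s and (b+1)! = (b+1) b!.

   Commutations are handled through the bicommutant of a matrix, a subring
   closed under inversion whose elements pairwise commute. *)

Section Bicommutant.
Variable R : unitRingType.

Definition bicomm (c x : R) := forall y, GRing.comm c y -> GRing.comm x y.

Lemma bicomm_refl (c : R) : bicomm c c.
Proof. by []. Qed.

Lemma bicomm_central (c x : R) : (forall y, GRing.comm x y) -> bicomm c x.
Proof. by move=> hx y _; apply: hx. Qed.

Lemma bicomm1 (c : R) : bicomm c 1.
Proof. by apply: bicomm_central => y; apply/commr_sym/commr1. Qed.

Lemma bicommD (c x y : R) : bicomm c x -> bicomm c y -> bicomm c (x + y).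
Proof. by move=> hx hy z hz; apply/commr_sym/commrD; apply/commr_sym; auto. Qed.

Lemma bicommN (c x : R) : bicomm c x -> bicomm c (- x).
Proof. by move=> hx z hz; apply/commr_sym/commrN; apply/commr_sym; auto. Qed.

Lemma bicommB (c x y : R) : bicomm c x -> bicomm c y -> bicomm c (x - y).
Proof. by move=> hx hy; apply: bicommD => //; apply: bicommN. Qed.

Lemma bicommM (c x y : R) : bicomm c x -> bicomm c y -> bicomm c (x * y).
Proof. by move=> hx hy z hz; apply/commr_sym/commrM; apply/commr_sym; auto. Qed.

Lemma bicommV (c x : R) : bicomm c x -> bicomm c x^-1.
Proof. by move=> hx z hz; apply/commr_sym/commrV; apply/commr_sym; auto. Qed.

Lemma bicomm_comm (c x y : R) : bicomm c x -> bicomm c y -> GRing.comm x y.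
Proof. by move=> hx hy; apply/hx/commr_sym/hy. Qed.

Lemma invrB (x y : R) : x \is a GRing.unit -> y \is a GRing.unit ->
  x^-1 - y^-1 = x^-1 * (y - x) * y^-1.
Proof. by move=> ux uy; rewrite mulrBr mulrBl mulrK // mulVr // mul1r. Qed.

End Bicommutant.

Section Pochhammer.
Variables (K : fieldType) (n : nat).
Local Notation M := 'M[K]_n.+1.

Lemma scalar_mx_alg (a : K) : (a%:M : M) = a%:A.
Proof. by rewrite -scalemx1. Qed.

Lemma bicomm_scalar (c : M) (a : K) : bicomm c a%:M.
Proof. by apply: bicomm_central => y; rewrite scalar_mx_alg; apply: comm_alg. Qed.

Lemma pochS (x : M) m : poch x m.+1 = poch x m * (x + (m%:R)%:M).
Proof. by []. Qed.

(* (x)_m is a polynomial in x. *)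
Lemma bicomm_poch (c x : M) m : bicomm c x -> bicomm c (poch x m).
Proof.
move=> hx; elim: m => [|m IH]; first exact: bicomm_scalar.
by rewrite pochS; apply: bicommM => //; apply: bicommD => //; apply: bicomm_scalar.
Qed.

Lemma poch_shift (x : M) m : poch x m.+1 = x * poch (x + 1) m.
Proof.
elim: m => [|m IH]; first by rewrite pochS mulr1 mul1r scalar_mx_alg scale0r addr0.
rewrite pochS IH -mulrA [in RHS]pochS -addrA !scalar_mx_alg.
by rewrite -natr1 scalerDl scale1r (addrC 1).
Qed.

Lemma poch_unit (x : M) m :
  (forall t, (t < m)%N -> x + (t%:R)%:M \is a GRing.unit) ->
  poch x m \is a GRing.unit.
Proof.
elim: m => [|m IH] hx; first exact: unitr1.
by rewrite pochS unitrMl ?hx // IH // => t /ltnW; apply: hx.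
Qed.

Lemma poch_inv_step (d : M) b :
  d - 1 \is a GRing.unit -> (forall t : nat, d + (t%:R)%:M \is a GRing.unit) ->
  (poch (d - 1) b.+1)^-1 - (poch d b.+1)^-1 =
  b.+1%:R *: ((poch (d + 1) b)^-1 * (d - 1)^-1 * d^-1).
Proof.
move=> ue ud.
have ud0 : d \is a GRing.unit by move: (ud 0%N); rewrite raddf0 addr0.
have bd1 : bicomm d (d + 1) by exact/bicommD/bicomm1.
set e := d - 1; set q := poch d b; set q' := poch (d + 1) b; set f := d + (b%:R)%:M.
have be : bicomm d e by exact/bicommB/bicomm1.
have uq : q \is a GRing.unit by apply: poch_unit => t _.
have uf : f \is a GRing.unit by apply: ud.
have pe : poch e b.+1 = q * e.
  by rewrite poch_shift subrK; exact: bicomm_comm be (bicomm_poch b (@bicomm_refl _ d)).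
have pf : poch d b.+1 = q * f by [].
have pd : poch d b.+1 = d * q' by rewrite poch_shift.
have uq' : q' \is a GRing.unit by rewrite -(unitrMr q' ud0) -pd pf unitrMl.
have fe : f - e = b.+1%:R%:A.
  by rewrite /f /e opprB addrC addrA subrK scalar_mx_alg -natr1 scalerDl scale1r addrC.
have upe : poch e b.+1 \is a GRing.unit by rewrite pe unitrMl.
have upd : poch d b.+1 \is a GRing.unit by rewrite pf unitrMl.
rewrite invrB // !pe {1}pf -mulrBr invrM // -(mulrA e^-1) mulKr //.
rewrite fe pd invrM // mulr_algr -scalerAl mulrA.
by rewrite (bicomm_comm (bicommV be) (bicommV (bicomm_poch b bd1))).
Qed.

(* Telescoping the one-step identity along d = C - n1 + 1, n1 = 1..N. *)
Lemma poch_inv_telescope (c : M) b N :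
  (forall t : nat, c + (t%:R)%:M \is a GRing.unit) ->
  (forall m, (m <= N)%N -> c - (m%:R)%:M \is a GRing.unit) ->
  (poch (c - (N%:R)%:M) b.+1)^-1 - (poch c b.+1)^-1 =
  b.+1%:R *: \sum_(1 <= n1 < N.+1)
     ((poch (c + (2%:R - n1%:R)%:M) b)^-1 * (c - (n1%:R)%:M)^-1
        * (c - ((n1.-1)%:R)%:M)^-1).
Proof.
move=> hpos; elim: N => [|N IH] hneg.
  by rewrite big_geq // scaler0 mulr0n raddf0 subr0 subrr.
rewrite big_nat_recr // scalerDr -IH; last by move=> m /leqW; apply: hneg.
set d := c - (N%:R)%:M.
have shift (u : K) : d + u%:M = c + (u - N%:R)%:M.
  by rewrite /d -addrA -raddfN -raddfD (addrC (- _)).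
have eq_up : c + (2%:R - N.+1%:R)%:M = d + 1.
  by rewrite -[X in _ = _ + X]/(1%:M : M) shift -natr1; congr (c + _%:M); ring.
have eq_dn : c - (N.+1%:R)%:M = d - 1.
  rewrite -[X in _ = _ - X]/(1%:M : M) -!raddfN shift -natr1 /=.
  by congr (c + _%:M); ring.
rewrite eq_up eq_dn -poch_inv_step.
- by rewrite [RHS]addrC addrA subrK.
- by rewrite -eq_dn; apply: hneg.
move=> t; rewrite shift; case: (leqP t N) => ht.
  have -> : (t%:R - N%:R : K) = - (N - t)%N%:R by rewrite natrB //; ring.
  by rewrite raddfN; apply: hneg; exact: leq_trans (leq_subr _ _) (leqnSn _).
by rewrite -natrB ?(ltnW ht) //; apply: hpos.
Qed.
End Pochhammer.

Section OrderedProduct.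
Variables (K : fieldType) (n k : nat).
Local Notation M := 'M[K]_n.+1.

Lemma ordprod_ext (F G : 'I_k -> M) : F =1 G -> ordprod F = ordprod G.
Proof. by move=> eFG; rewrite /ordprod; elim: (enum 'I_k) => //= j s ->; rewrite eFG. Qed.

Lemma ordprod_comm (F : 'I_k -> M) x :
  (forall j, GRing.comm (F j) x) -> GRing.comm (ordprod F) x.
Proof.
move=> hF; rewrite /ordprod; elim: (enum 'I_k) => [|j s IH] /=.
  exact/commr_sym/commr1.
by apply/commr_sym/commrM; apply/commr_sym.
Qed.

Lemma ordprod_isolate (F : 'I_k -> M) i :
  (forall j, j != i -> GRing.comm (F j) (F i)) ->
  ordprod F = F i * ordprod (fun j => if j == i then 1 else F j).
Proof.
move=> hF; rewrite /ordprod.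
suff gen s : uniq s -> foldr (fun j acc => F j *m acc) 1%:M s =
    (if i \in s then F i else 1) *
    foldr (fun j acc => (if j == i then 1 else F j) *m acc) 1%:M s.
  by rewrite gen ?enum_uniq // mem_enum.
elim: s => [|j s IH] /=; first by rewrite mul1r.
case/andP=> js us; rewrite !mulmxE IH // in_cons.
have [eji | ji] := eqVneq j i; first by rewrite -eji (negbTE js) /=.
by case: (i \in s); rewrite !mulrA ?(hF j ji) ?mul1r ?mulr1.
Qed.

End OrderedProduct.

Section Coefficients.
Variables (K : numFieldType) (n k : nat).
Local Notation M := 'M[K]_n.+1.
Implicit Types (A B : M) (C : 'I_k -> M) (m : 'I_k -> nat).

Definition mfact m : K := \prod_(j < k) ((m j)`!)%:R.
Definition msum m : nat := (\sum_(j < k) m j)%N.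

Definition ordprod_off C i m : M :=
  ordprod (fun j => if j == i then 1 else pochinv (C j) (m j)).

Lemma FCcoef_ext A B C C' m : C =1 C' -> FCcoef A B C m = FCcoef A B C' m.
Proof.
by move=> eC; rewrite /FCcoef; congr (_ *: (_ *m _)); apply: ordprod_ext => j; rewrite eC.
Qed.

Lemma FCcoef_isolate A B C i Y m :
  (forall j, GRing.comm (C j) (C i)) -> bicomm (C i) Y ->
  FCcoef A B (updC C i Y) m =
  (mfact m)^-1 *: (poch A (msum m) * poch B (msum m) *
                   ((poch Y (m i))^-1 * ordprod_off C i m)).
Proof.
move=> hC hY; rewrite /FCcoef !mulmxE (ordprod_isolate (i := i)).
  rewrite /updC eqxx; congr (_ *: (_ * (_ * _))).
  by apply: ordprod_ext => j; case: (j == i).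
move=> j ji; rewrite /updC eqxx (negbTE ji).
apply/commr_sym/(bicommV (bicomm_poch _ hY))/commr_sym.
exact: (bicommV (bicomm_poch _ (@bicomm_refl _ (C j)))) _ (hC j).
Qed.

Lemma decr_off m i j : j != i -> decr m i j = m j.
Proof. by rewrite /decr => /negbTE ->. Qed.

Lemma ordprod_off_decr C i m : ordprod_off C i (decr m i) = ordprod_off C i m.
Proof.
by apply: ordprod_ext => j; have [// | /decr_off ->] := eqVneq j i.
Qed.

Section Decrement.
Variables (m : 'I_k -> nat) (i : 'I_k) (b : nat).
Hypothesis mi : m i = b.+1.

Lemma decr_at : decr m i i = b.
Proof. by rewrite /decr eqxx mi. Qed.

Lemma msum_decr : msum m = (msum (decr m i)).+1.
Proof.
rewrite /msum (bigD1 i) // [in RHS](bigD1 i) //= decr_at mi addSn.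
by congr (_ + _).+1%N; apply: eq_bigr => j /decr_off ->.
Qed.

Lemma mfact_decr : mfact m = b.+1%:R * mfact (decr m i).
Proof.
rewrite /mfact (bigD1 i) // [in RHS](bigD1 i) //= decr_at mi factS natrM -mulrA.
by congr (_ * (_ * _)); apply: eq_bigr => j /decr_off ->.
Qed.
End Decrement.

Lemma poch_pair_shift A B s : A * B = B * A ->
  A * B * (poch (A + 1) s * poch (B + 1) s) = poch A s.+1 * poch B s.+1.
Proof.
move=> hAB; rewrite !poch_shift -!mulrA; congr (A * _); rewrite !mulrA; congr (_ * _).
have hBA1 : GRing.comm B (A + 1) by apply: commrD; [exact/commr_sym | exact: commr1].
exact/commr_sym/(bicomm_poch s (@bicomm_refl _ (A + 1)))/commr_sym.
Qed.


Lemma FCcoef_shifted_sum A B C i N m :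
  (forall j, GRing.comm (C j) (C i)) ->
  \sum_(1 <= n1 < N.+1)
     FCcoef (A + 1%:M) (B + 1%:M) (updC C i (C i + (2%:R - n1%:R)%:M)) m
     *m invmx (C i - (n1%:R)%:M) *m invmx (C i - ((n1.-1)%:R)%:M)
  = (mfact m)^-1 *: (poch (A + 1) (msum m) * poch (B + 1) (msum m) *
       (\sum_(1 <= n1 < N.+1) (poch (C i + (2%:R - n1%:R)%:M) (m i))^-1
          * (C i - (n1%:R)%:M)^-1 * (C i - ((n1.-1)%:R)%:M)^-1)
       * ordprod_off C i m).
Proof.
move=> hC; rewrite mulmxE mulr_sumr mulr_suml scaler_sumr; apply: eq_bigr => n1 _.
have bCi (u : K) : bicomm (C i) (C i - u%:M) by exact/bicommB/bicomm_scalar.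
have hQ (u : K) : GRing.comm (ordprod_off C i m) (C i - u%:M)^-1.
  apply: ordprod_comm => j; case: (j == i); first exact/commr_sym/commr1.
  apply/commr_sym/(bicommV (bCi u))/commr_sym.
  exact: (bicommV (bicomm_poch _ (@bicomm_refl _ (C j)))) _ (hC j).
rewrite FCcoef_isolate //; last exact/bicommD/bicomm_scalar.
rewrite -!scalerAl; congr (_ *: _); rewrite -!mulrA; do 3 congr (_ * _).
by rewrite mulrA hQ -mulrA hQ.
Qed.


Lemma FCcoef_contiguity A B C i N m :
  (forall (j : 'I_k) (t : nat), C j + (t%:R)%:M \in unitmx) ->
  A *m B = B *m A ->
  (forall j l : 'I_k, C j *m C l = C l *m C j) ->
  (forall t : nat, (t <= N)%N -> C i - (t%:R)%:M \in unitmx) ->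
  FCcoef A B (updC C i (C i - (N%:R)%:M)) m
  = FCcoef A B C m
    + mulxcoef i (fun m' =>
        A *m B *m
        (\sum_(1 <= n1 < N.+1)
           FCcoef (A + 1%:M) (B + 1%:M) (updC C i (C i + (2%:R - n1%:R)%:M)) m'
           *m invmx (C i - (n1%:R)%:M) *m invmx (C i - ((n1.-1)%:R)%:M))) m.
Proof.
move=> hpos hAB hCC hneg.
have hC j : GRing.comm (C j) (C i) by rewrite /GRing.comm -!mulmxE hCC.
have -> : FCcoef A B C m = FCcoef A B (updC C i (C i)) m.
  by apply: FCcoef_ext => j; rewrite /updC; case: eqP => // ->.
rewrite !FCcoef_isolate //; last exact/bicommB/bicomm_scalar.
rewrite /mulxcoef; case mi: (m i) => [|b]; rewrite ?ltnn ?ltn0Sn ?addr0 //.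
rewrite FCcoef_shifted_sum // (decr_at mi) ordprod_off_decr.
rewrite (mfact_decr mi) (msum_decr mi) -(poch_pair_shift _ hAB) !mulmxE.
rewrite [RHS]addrC; apply/eqP; rewrite -subr_eq -scalerBr -mulrBr -mulrBl; apply/eqP.
rewrite poch_inv_telescope //.
rewrite -scalerAl -scalerAr scalerA -scalerAr !mulrA; congr (_ *: _).
by rewrite invfM mulrAC mulVf ?mul1r // pnatr_eq0.
Qed.

End Coefficients.

Unset Implicit Arguments.

Theorem mainTheorem10 (R : realType) (r k : nat)
    (A B : 'M[complex R]_r) (C : 'I_k -> 'M[complex R]_r) (i : 'I_k) (n : nat) :
  (1 <= k)%N ->
  (forall (j : 'I_k) (m : nat), C j + (m%:R)%:M \in unitmx) ->
  A *m B = B *m A ->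
  (forall j l : 'I_k, C j *m C l = C l *m C j) ->
  (1 <= n)%N ->
  (forall m : nat, (m <= n)%N -> C i - (m%:R)%:M \in unitmx) ->
  forall mi : 'I_k -> nat,
    FCcoef A B (updC C i (C i - (n%:R)%:M)) mi
    = FCcoef A B C mi
      + mulxcoef i (fun m' =>
          A *m B *m
          (\sum_(1 <= n1 < n.+1)
             FCcoef (A + 1%:M) (B + 1%:M)
                    (updC C i (C i + (2%:R - n1%:R)%:M)) m'
             *m invmx (C i - (n1%:R)%:M)
             *m invmx (C i - ((n1.-1)%:R)%:M))) mi.
Proof.
case: r A B C => [|r] A B C _ hpos hAB hCC _ hneg mi.
  by apply/matrixP => p q; case: q.
exact: FCcoef_contiguity.
Qed.
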